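(* Let $\mathcal C\subseteq 2^{[n]}$ and let $n$ be a $k$-piercing of $\mathcal C$ with associated interval $[\sigma,\tau]$. Then $$\mathrm{CF}(J_\mathcal C)=\mathrm{CF}(J_{\mathcal C\setminus n})\sqcup\{x_nx_i: i\in[n-1]\setminus\tau\}\sqcup\{x_n(1-x_j): j\in\sigma\}.$$
   Context: A code is a set $\mathcal C\subseteq 2^{[n]}$, $[n]=\{1,\dots,n\}$. Standing conventions: $\emptyset\in\mathcal C$; every neuron lies in some codeword; no two distinct neurons lie in exactly the same codewords. $\mathcal C\setminus n$ is the code on $[n-1]$ obtained by removing $n$ from every codeword. For $\sigma\subseteq\tau$, $[\sigma,\tau]=\{\gamma:\sigma\subseteq\gamma\subseteq\tau\}$, of rank $|\tau\setminus\sigma|$. The neuron $n$ is a $k$-piercing of $\mathcal C$ with associated interval $[\sigma,\tau]$ if $\sigma\subseteq\tau\subseteq[n-1]$, $[\sigma,\tau]$ has rank $k$, $[\sigma,\tau]\subseteq\mathcal C\setminus n$, and $\mathcal C=(\mathcal C\setminus n)\cup[\sigma\cup\{n\},\tau\cup\{n\}]$. A pseudo-monomial is $\prod_{i\in\alpha}x_i\prod_{j\in\beta}(1-x_j)$ with $\alpha\cap\beta=\emptyset$, ordered by divisibility. For a code $\mathcal D$ on $[m]$, $J_\mathcal D=\langle\rho_\gamma:\gamma\notin\mathcal D\rangle\subseteq\mathbb F_2[x_1,\dots,x_m]$ with $\rho_\gamma=\prod_{i\in\gamma}x_i\prod_{j\in[m]\setminus\gamma}(1-x_j)$, and $\mathrm{CF}(J_\mathcal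 D)$ is the set of minimal pseudo-monomials in $J_\mathcal D$. *)

From HB Require Import structures.
From mathcomp Require Import all_boot all_order all_algebra.
From mathcomp Require Import mpoly.
Set Implicit Arguments. Unset Strict Implicit. Unset Printing Implicit Defensive.
Import GRing.Theory.
Local Open Scope ring_scope.

(* Neurons of a code on [m] are indexed by 'I_m (0-based). A code is a
   {set {set 'I_m}}. *)

Definition code_conventions (m : nat) (C : {set {set 'I_m}}) : Prop :=
  [/\ set0 \in C,
      (forall i : 'I_m, exists2 c, c \in C & i \in c) &
      (forall i j : 'I_m, (forall c, c \in C -> (i \in c) = (j \in c)) -> i = j)].

(* [n-1] embedded in [n]: i |-> i (0-based), the last neuron is ord_max. *)
Definition wd (m : nat) (i : 'I_m) : 'I_m.+1 := widen_ord (leqnSn m) i.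

Definition code_del (m : nat) (C : {set {set 'I_m.+1}}) : {set {set 'I_m}} :=
  [set [set i : 'I_m | wd i \in c] | c : {set 'I_m.+1} in C].

Definition in_interval (m : nat) (sigma tau g : {set 'I_m}) : bool :=
  (sigma \subset g) && (g \subset tau).

Definition k_piercing (m k : nat) (C : {set {set 'I_m.+1}})
    (sigma tau : {set 'I_m}) : Prop :=
  [/\ sigma \subset tau,
      #|tau :\: sigma| = k,
      (forall g, in_interval sigma tau g -> g \in code_del C) &
      C = [set @wd m @: c | c : {set 'I_m} in code_del C]
          :|: [set ord_max |: (@wd m @: g) | g : {set 'I_m} in [set g | in_interval sigma tau g]]].

Notation poly2 m := {mpoly 'F_2[m]}.

Definition pm (m : nat) (a b : {set 'I_m}) : poly2 m :=
  (\prod_(i in a) 'X_i) * \prod_(j in b) (1 - 'X_j).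

Definition is_pm_pair (m : nat) (a b : {set 'I_m}) : bool := [disjoint a & b].

Definition rho (m : nat) (g : {set 'I_m}) : poly2 m := pm g (~: g).

Definition inJ (m : nat) (D : {set {set 'I_m}}) (p : poly2 m) : Prop :=
  exists c : {set 'I_m} -> poly2 m, p = \sum_(g | g \notin D) c g * rho g.

Definition pdvd (m : nat) (p q : poly2 m) : Prop := exists r, q = r * p.

Definition inCF (m : nat) (D : {set {set 'I_m}}) (a b : {set 'I_m}) : Prop :=
  [/\ is_pm_pair a b, inJ D (pm a b) &
      forall a' b', is_pm_pair a' b' -> inJ D (pm a' b') ->
        pdvd (pm a' b') (pm a b) -> pm a' b' = pm a b].

(* The three families on the right-hand side, as pairs (alpha, beta)
   on [n] = 'I_m.+1. *)
Definition fam1 (m : nat) (C : {set {set 'I_m.+1}}) (a b : {set 'I_m.+1}) : Prop :=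
  exists a0 b0 : {set 'I_m}, [/\ inCF (code_del C) a0 b0, a = @wd m @: a0 & b = @wd m @: b0].

Definition fam2 (m : nat) (tau : {set 'I_m}) (a b : {set 'I_m.+1}) : Prop :=
  exists i : 'I_m, [/\ i \notin tau, a = [set ord_max; wd i] & b = set0].

Definition fam3 (m : nat) (sigma : {set 'I_m}) (a b : {set 'I_m.+1}) : Prop :=
  exists j : 'I_m, [/\ j \in sigma, a = [set ord_max] & b = [set wd j]].

(* Over F_2, evaluation at indicator vectors of subsets turns the algebra into
   combinatorics: [pm a b] lies in [J_D] iff no codeword [c] of [D] satisfies
   [a ⊆ c] and [b ∩ c = ∅], and [pm a' b'] divides [pm a b] iff [a' ⊆ a] and
   [b' ⊆ b].  So [CF(J_D)] consists of the inclusion-minimal such pairs.  For a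
   piercing, the codewords of [C] without [n] are the codewords of [C \ n], and
   those with [n] are the [n ∪ γ] with [γ ∈ [σ, τ]].  A minimal pair with
   [n ∉ a] is therefore a minimal pair of [C \ n]; a minimal pair with [n ∈ a]
   contains [x_n x_i] with [i ∉ τ] or [x_n (1 - x_j)] with [j ∈ σ], and then
   equals it: otherwise the codeword [n ∪ σ ∪ a] would lie in its box. *)

From HB Require Import structures.
From mathcomp Require Import all_boot all_order all_algebra.
From mathcomp Require Import mpoly.

Set Implicit Arguments. Unset Strict Implicit. Unset Printing Implicit Defensive.
Import GRing.Theory.
Local Open Scope ring_scope.

Section PseudoMonomials.
Variable m : nat.
Implicit Types (a b c g v : {set 'I_m}) (D : {set {set 'I_m}}).

Lemma pm_prod a b : [disjoint a & b] ->
  pm a b = \prod_i (if i \in a then 'X_i else if i \in b then 1 - 'X_i else 1).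
Proof.
move=> dab; rewrite /pm (big_mkcond (mem a)) (big_mkcond (mem b)) -big_split.
apply: eq_bigr => i _ /=; case: ifP => ia; last by rewrite mul1r.
by rewrite (disjointFr dab ia) mulr1.
Qed.

Lemma pm_sum_rho a b : [disjoint a & b] ->
  pm a b = \sum_(g : {set 'I_m} | (a \subset g) && [disjoint b & g]) rho g.
Proof.
(* Distributing [\prod_i (F i + G i)], the term indexed by [g] is [rho g]
   if [g] lies in the box [[a, ~: b]] and [0] otherwise. *)
move=> dab; pose F i : poly2 m := if i \in b then 0 else 'X_i.
pose G i : poly2 m := if i \in a then 0 else 1 - 'X_i.
have -> : pm a b = \prod_i (F i + G i).
  rewrite pm_prod //; apply: eq_bigr => i _; rewrite /F /G.
  case: ifP => ia; first by rewrite (disjointFr dab ia) addr0.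
  by case: ifP => _; rewrite ?add0r // addrC subrK.
rewrite bigA_distr [RHS]big_mkcond; apply: eq_bigr => g _ /=.
case: ifP => [/andP [ag bg] | ].
  rewrite /rho /pm (bigID (mem g)) /=; congr (_ * _).
    by apply: eq_bigr => i ig; rewrite ig /F (disjointFl bg ig).
  apply: eq_big => [i | i /negbTE ig]; first by rewrite inE.
  by rewrite ig /G (contraFF (subsetP ag i) ig).
move/negbT; rewrite negb_and => /orP [/subsetPn [i ia /negbTE ig] | ].
  by rewrite (bigD1 i) //= ig /G ia mul0r.
rewrite -setI_eq0 => /set0Pn [i /setIP [ib ig]].
by rewrite (bigD1 i) //= ig /F ib mul0r.
Qed.

Definition indicator v (i : 'I_m) : 'F_2 := if i \in v then 1 else 0.

Lemma prod_indicator a v :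
  \prod_(i in a) indicator v i = if a \subset v then 1 else 0.
Proof.
case: ifP => [/subsetP av | /negbT /subsetPn [i ia /negbTE iv]].
  by apply: big1 => i /av; rewrite /indicator => ->.
by rewrite (bigD1 i) //= /indicator iv mul0r.
Qed.

Lemma meval_pm v a b :
  (pm a b).@[indicator v] = if (a \subset v) && [disjoint b & v] then 1 else 0.
Proof.
have indicatorC i : 1 - indicator v i = indicator (~: v) i.
  by rewrite /indicator inE; case: (i \in v); rewrite ?subr0 ?subrr.
rewrite mevalM !(big_morph _ (mevalM _) (meval1 _)).
under eq_bigr do rewrite mevalXU.
under [X in _ * X]eq_bigr do rewrite mevalB meval1 mevalXU indicatorC.
rewrite !prod_indicator disjoints_subset.
by case: (a \subset v); case: (b \subset ~: v); rewrite ?mulr1 ?mulr0.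
Qed.

Lemma meval_rho v g : (rho g).@[indicator v] = if g == v then 1 else 0.
Proof. by rewrite meval_pm disjoint_sym disjoints_subset setCK eqEsubset. Qed.

Definition vanishes_on D a b : Prop :=
  forall c, c \in D -> a \subset c -> [disjoint b & c] -> False.

Lemma vanishes_on_mem_l D a b c x : vanishes_on D a b -> c \in D ->
  [disjoint b & c] -> a \subset x |: c -> x \in a.
Proof.
move=> vab cD bc axc; apply/negPn/negP => xa; apply: (vab c cD _ bc).
apply/subsetP => y ya; case/setU1P: (subsetP axc y ya) => [eyx | //].
by move: xa; rewrite -eyx ya.
Qed.

Lemma vanishes_on_mem_r D a b c x : vanishes_on D a b -> c \in D ->
  a \subset c -> b \subset x |: ~: c -> x \in b.
Proof.
move=> vab cD ac bxc; apply/negPn/negP => xb; apply: (vab c cD ac).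
rewrite disjoints_subset; apply/subsetP => y yb.
case/setU1P: (subsetP bxc y yb) => [eyx | //].
by move: xb; rewrite -eyx yb.
Qed.

Lemma inJ_pm_vanishes D a b :
  [disjoint a & b] -> inJ D (pm a b) <-> vanishes_on D a b.
Proof.
move=> dab; split=> [[coef def_pm] c cD ac bc | vanD].
  have := congr1 (meval (indicator c)) def_pm.
  rewrite meval_pm ac bc (big_morph _ (mevalD _) (meval0 _)) big1 ?oner_eq0 //.
  move=> g gD; rewrite mevalM meval_rho.
  by case: eqP gD => [-> | _]; rewrite ?cD ?mulr0.
exists (fun g => if (a \subset g) && [disjoint b & g] then 1 else 0).
rewrite pm_sum_rho // big_mkcond [RHS]big_mkcond; apply: eq_bigr => g _ /=.
case: ifP => [/andP [ag bg] | _]; last by case: ifP; rewrite ?mul0r.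
by case: ifPn => [gD | /negbNE gD]; [rewrite mul1r | case: (vanD g)].
Qed.

Lemma pdvd_pm_subset a b a' b' : [disjoint a & b] ->
  pdvd (pm a' b') (pm a b) <-> a' \subset a /\ b' \subset b.
Proof.
move=> dab; split=> [[r def_pm] | [a'a b'b]].
  (* Evaluate at the two extreme points [a] and [~: b] of the box of [pm a b]. *)
  have in_box v : (a \subset v) && [disjoint b & v] ->
      (a' \subset v) && [disjoint b' & v].
    move=> abv; have := congr1 (meval (indicator v)) def_pm.
    rewrite meval_pm mevalM meval_pm abv; case: ifP => // _.
    by rewrite mulr0 => /eqP; rewrite oner_eq0.
  have /andP [a'a _] : (a' \subset a) && [disjoint b' & a].
    by apply: in_box; rewrite subxx disjoint_sym.
  have /andP [_] : (a' \subset ~: b) && [disjoint b' & ~: b].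
    by apply: in_box; rewrite -disjoints_subset dab disjoints_subset setCK subxx.
  by rewrite disjoints_subset setCK.
exists (pm (a :\: a') (b :\: b')).
rewrite /pm (big_setID a') (big_setID (A := b) b') /=.
by rewrite (setIidPr a'a) (setIidPr b'b) mulrACA mulrC.
Qed.

Lemma pm_inj a b a' b' : [disjoint a & b] -> [disjoint a' & b'] ->
  pm a' b' = pm a b -> a' = a /\ b' = b.
Proof.
move=> dab da'b' eq_pm.
have [a'a b'b] : a' \subset a /\ b' \subset b.
  by apply/pdvd_pm_subset => //; exists 1; rewrite mul1r.
have [aa' bb'] : a \subset a' /\ b \subset b'.
  by apply/pdvd_pm_subset => //; exists 1; rewrite mul1r.
by split; apply/eqP; rewrite eqEsubset ?a'a ?aa' ?b'b ?bb'.
Qed.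

Definition minimal_vanishing D a b : Prop :=
  [/\ [disjoint a & b], vanishes_on D a b &
      forall a' b', a' \subset a -> b' \subset b -> vanishes_on D a' b' ->
        a' = a /\ b' = b].

Lemma inCF_minimal D a b : inCF D a b <-> minimal_vanishing D a b.
Proof.
split=> [[dab Jab minab] | [dab vab minab]].
  split=> //; first exact/inJ_pm_vanishes.
  move=> a' b' a'a b'b va'b'.
  have da'b' : [disjoint a' & b'] by apply: disjointWl a'a (disjointWr b'b dab).
  apply: pm_inj => //; apply: minab => //; first exact/inJ_pm_vanishes.
  exact/pdvd_pm_subset.
split=> //; first exact/inJ_pm_vanishes.
move=> a' b' da'b' Ja'b' /pdvd_pm_subset [//|a'a b'b].
by have [-> ->] := minab a' b' a'a b'b (proj1 (inJ_pm_vanishes _ da'b') Ja'b').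
Qed.

End PseudoMonomials.

Section LastNeuron.
Variable m : nat.
Implicit Types (a b c : {set 'I_m.+1}) (g h : {set 'I_m}).
Local Notation W := (@wd m).

Lemma wd_lift (i : 'I_m) : W i = lift ord_max i.
Proof. by apply: val_inj; rewrite [RHS]lift_max. Qed.

Lemma wd_inj : injective W.
Proof. by move=> i j; rewrite !wd_lift => /lift_inj. Qed.

Lemma wd_neq_max i : (W i == ord_max) = false.
Proof. by rewrite wd_lift eq_sym (negbTE (neq_lift _ _)). Qed.

Lemma max_notin_wd g : (ord_max \in W @: g) = false.
Proof. by apply/imsetP => -[i _ /eqP]; rewrite eq_sym wd_neq_max. Qed.

Lemma preim_wdK g : W @^-1: (W @: g) = g.
Proof. by apply/setP => i; rewrite inE mem_imset //; apply: wd_inj. Qed.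

Lemma preim_max_wd g : W @^-1: (ord_max |: W @: g) = g.
Proof. by apply/setP => i; rewrite !inE wd_neq_max mem_imset //; apply: wd_inj. Qed.

Lemma imset_preim_wd c : W @: (W @^-1: c) = c :\ ord_max.
Proof.
apply/setP => j; rewrite !inE; case: (unliftP ord_max j) => [i -> | ->].
  by rewrite -wd_lift wd_neq_max mem_imset ?inE //; apply: wd_inj.
by rewrite max_notin_wd eqxx.
Qed.

Lemma imset_preim_wd_notin c : ord_max \notin c -> W @: (W @^-1: c) = c.
Proof.
by rewrite imset_preim_wd => Nc; apply/setDidPl; rewrite disjoint_sym disjoints1.
Qed.

Lemma sub_imset_wd a g :
  a \subset W @: g -> exists2 h : {set 'I_m}, h \subset g & a = W @: h.
Proof.
move=> ag; exists (W @^-1: a); first by rewrite -(preim_wdK g); apply: preimsetS.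
rewrite imset_preim_wd_notin //.
by apply: contraFN (max_notin_wd g); apply: (subsetP ag).
Qed.

Lemma subset_split a c :
  (a \subset c) = ((ord_max \in a) ==> (ord_max \in c)) && (W @^-1: a \subset W @^-1: c).
Proof.
apply/subsetP/andP => [ac | [/implyP Nac /subsetP ac] j].
  by split; [apply/implyP; apply: ac | apply/subsetP => i; rewrite !inE; apply: ac].
case: (unliftP ord_max j) => [i -> | -> //]; rewrite -wd_lift => ia.
by have := ac i; rewrite !inE; apply.
Qed.

Lemma disjoint_split b c : [disjoint b & c] =
  ~~ ((ord_max \in b) && (ord_max \in c)) && [disjoint W @^-1: b & W @^-1: c].
Proof.
rewrite !disjoints_subset subset_split -preimsetC inE.
by case: (ord_max \in b); case: (ord_max \in c).
Qed.

Lemma subset_wd g h : (W @: g \subset W @: h) = (g \subset h).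
Proof. by rewrite subset_split !preim_wdK max_notin_wd. Qed.

Lemma disjoint_wd g h : [disjoint W @: g & W @: h] = [disjoint g & h].
Proof. by rewrite disjoint_split !preim_wdK max_notin_wd. Qed.

End LastNeuron.

Section Piercing.
Variables (m : nat) (C : {set {set 'I_m.+1}}) (sigma tau : {set 'I_m}).
Local Notation W := (@wd m).
Hypothesis C_pierced : C = [set W @: c | c : {set 'I_m} in code_del C]
  :|: [set ord_max |: W @: g | g : {set 'I_m} in [set g | in_interval sigma tau g]].
Hypothesis sigma_sub_tau : sigma \subset tau.
Implicit Types (a b c : {set 'I_m.+1}) (g h : {set 'I_m}).

Lemma mem_pierced c : (c \in C) =
  if ord_max \in c then in_interval sigma tau (W @^-1: c) else W @^-1: c \in code_del C.
Proof.
apply/idP/idP.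
  rewrite {1}C_pierced inE => /orP [] /imsetP [g gI ->].
    by rewrite max_notin_wd preim_wdK.
  by rewrite setU11 preim_max_wd; rewrite inE in gI.
case: ifPn => Nc cI; rewrite C_pierced inE; apply/orP; [right | left].
  by apply/imsetP; exists (W @^-1: c); rewrite ?inE // imset_preim_wd setD1K.
by apply/imsetP; exists (W @^-1: c); rewrite ?imset_preim_wd_notin.
Qed.

Lemma max_sigma_in_code : ord_max |: W @: sigma \in C.
Proof. by rewrite mem_pierced setU11 preim_max_wd /in_interval subxx sigma_sub_tau. Qed.

Lemma vanishes_on_del a b : ord_max \notin a -> vanishes_on C a b ->
  vanishes_on (code_del C) (W @^-1: a) (W @^-1: b).
Proof.
move=> Na vab c0 c0D ac0 bc0; apply: (vab (W @: c0)).
- by rewrite mem_pierced max_notin_wd preim_wdK.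
- by rewrite subset_split (negbTE Na) preim_wdK.
- by rewrite disjoint_split max_notin_wd andbF preim_wdK.
Qed.

Lemma vanishes_on_wd g h :
  vanishes_on C (W @: g) (W @: h) <-> vanishes_on (code_del C) g h.
Proof.
split=> [/vanishes_on_del | vgh c cC]; first by rewrite max_notin_wd !preim_wdK; apply.
rewrite subset_split disjoint_split !preim_wdK !max_notin_wd /= => gc hc.
by apply: (vgh (W @^-1: c)) => //; apply/imsetP; exists c.
Qed.

Lemma minimal_vanishing_wd g h :
  minimal_vanishing C (W @: g) (W @: h) <-> minimal_vanishing (code_del C) g h.
Proof.
split=> [[dgh vgh min_gh] | [dgh vgh min_gh]].
  split; [by rewrite -disjoint_wd | exact/vanishes_on_wd |].
  move=> g' h'; rewrite -!(@subset_wd m) => g'g h'h /vanishes_on_wd v'.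
  have imset_wd_inj := imset_inj (@wd_inj m).
  by have [/imset_wd_inj -> /imset_wd_inj ->] := min_gh _ _ g'g h'h v'.
split; [by rewrite disjoint_wd | exact/vanishes_on_wd |].
move=> a' b' /sub_imset_wd [g' g'g ->] /sub_imset_wd [h' h'h ->] /vanishes_on_wd v'.
by have [-> ->] := min_gh _ _ g'g h'h v'.
Qed.

Lemma vanishes_on_fam2 i : i \notin tau -> vanishes_on C [set ord_max; W i] set0.
Proof.
move=> itau c cC /subsetP Nic _.
have ic : i \in W @^-1: c by rewrite inE; apply: Nic; apply: set22.
move: cC; rewrite mem_pierced Nic ?set21 // => /andP [_ /subsetP /(_ i ic)].
exact/negP.
Qed.

Lemma vanishes_on_fam3 j : j \in sigma -> vanishes_on C [set ord_max] [set W j].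
Proof.
move=> jsig c cC; rewrite sub1set disjoints1 => Nc /negP; apply.
by move: cC; rewrite mem_pierced Nc => /andP [/subsetP /(_ j jsig)]; rewrite inE.
Qed.

Lemma minimal_vanishing_max_in a b : minimal_vanishing C a b ->
  ord_max \in a -> fam2 tau a b \/ fam3 sigma a b.
Proof.
move=> [dab vab min_ab] Na; have Nb := negbT (disjointFr dab Na).
case: (pickP [pred i | (W i \in a) && (i \notin tau)]) => [i /andP [ia itau] | tau_a].
  have a_sub : [set ord_max; W i] \subset a by rewrite subUset !sub1set Na.
  left; exists i.
  by have [<- <-] := min_ab _ _ a_sub (sub0set b) (vanishes_on_fam2 itau).
case: (pickP [pred j | (W j \in b) && (j \in sigma)]) => [j /andP [jb jsig] | sigma_b].
  have [a_sub b_sub] : [set ord_max] \subset a /\ [set W j] \subset b.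
    by rewrite !sub1set.
  right; exists j.
  by have [<- <-] := min_ab _ _ a_sub b_sub (vanishes_on_fam3 jsig).
(* Otherwise the codeword [n ∪ σ ∪ a] lies in the box of [(a, b)]. *)
exfalso; apply: (vab (ord_max |: W @: (sigma :|: W @^-1: a))).
- rewrite mem_pierced setU11 preim_max_wd /in_interval subsetUl subUset sigma_sub_tau.
  by apply/subsetP => i; rewrite inE => ia; have := tau_a i; rewrite /= ia => /negbFE.
- by rewrite -{1}(setD1K Na) -imset_preim_wd setUS // imsetS // subsetUr.
rewrite disjoint_split preim_max_wd (negbTE Nb) /= disjoint_sym disjoints_subset.
rewrite subUset -!disjoints_subset; apply/andP; split.
  by apply/pred0P => j; rewrite /= inE andbC; apply: sigma_b.
by move: dab; rewrite disjoint_split => /andP [].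
Qed.

Lemma minimal_vanishing_max_notin a b : minimal_vanishing C a b ->
  ord_max \notin a -> fam1 C a b.
Proof.
move=> [dab vab min_ab] Na; have Ea := imset_preim_wd_notin Na.
have [_ Eb] : a = a /\ W @: (W @^-1: b) = b.
  apply: min_ab => //; first by rewrite imset_preim_wd subD1set.
  by rewrite -{1}Ea; apply/vanishes_on_wd; apply: vanishes_on_del.
exists (W @^-1: a), (W @^-1: b); split=> //.
by apply/inCF_minimal/minimal_vanishing_wd; rewrite Ea Eb.
Qed.

Hypothesis set0_in_code : set0 \in C.
Hypothesis neurons_covered : forall j, exists2 c, c \in C & j \in c.

Lemma minimal_vanishing_fam2 i : i \notin tau ->
  minimal_vanishing C [set ord_max; W i] set0.
Proof.
move=> itau; split; [by rewrite disjoint_sym disjoints_subset sub0set |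
  exact: vanishes_on_fam2 |].
move=> a' b' a'sub; rewrite subset0 => /eqP -> va'; split=> //.
have set0_disj c : [disjoint set0 & c] by rewrite disjoints_subset sub0set.
have [c cC ic] := neurons_covered (W i).
have Na' : ord_max \in a'.
  apply: (vanishes_on_mem_l va' cC (set0_disj c)).
  by rewrite (subset_trans a'sub) ?setUS ?sub1set.
have ia' : W i \in a'.
  apply: (vanishes_on_mem_l va' max_sigma_in_code (set0_disj _)).
  by rewrite (subset_trans a'sub) // subUset !sub1set !inE !eqxx orbT.
by apply/eqP; rewrite eqEsubset a'sub subUset !sub1set Na' ia'.
Qed.

Lemma minimal_vanishing_fam3 j : j \in sigma ->
  minimal_vanishing C [set ord_max] [set W j].
Proof.
move=> jsig; split; [by rewrite disjoints1 inE eq_sym wd_neq_max |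
  exact: vanishes_on_fam3 |].
move=> a' b' a'sub b'sub va'.
have Na' : ord_max \in a'.
  apply: (vanishes_on_mem_l va' set0_in_code); last by rewrite setU0.
  by rewrite disjoints_subset setC0 subsetT.
have jb' : W j \in b'.
  apply: (vanishes_on_mem_r va' max_sigma_in_code).
    by rewrite (subset_trans a'sub) // sub1set setU11.
  by rewrite (subset_trans b'sub) // sub1set setU11.
by split; apply/eqP; rewrite eqEsubset ?a'sub ?b'sub sub1set ?Na' ?jb'.
Qed.

End Piercing.

Theorem lemma2p2 (m k : nat) (C : {set {set 'I_m.+1}}) (sigma tau : {set 'I_m}) :
  code_conventions C ->
  k_piercing k C sigma tau ->
  (forall a b : {set 'I_m.+1},
     inCF C a b <-> (fam1 C a b \/ fam2 tau a b \/ fam3 sigma a b)) /\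
  (forall a b : {set 'I_m.+1},
     ~ (fam1 C a b /\ fam2 tau a b) /\ ~ (fam1 C a b /\ fam3 sigma a b) /\
     ~ (fam2 tau a b /\ fam3 sigma a b)).
Proof.
move=> [set0_in_code neurons_covered _] [sigma_sub_tau _ _ C_pierced].
split=> a b.
  rewrite inCF_minimal; split=> [min_ab | [[a0 [b0 [min0 -> ->]]] |
    [[i [itau -> ->]] | [j [jsig -> ->]]]]].
  - case: (boolP (ord_max \in a)) => Na; [right | left].
      exact: (minimal_vanishing_max_in C_pierced).
    exact: (minimal_vanishing_max_notin C_pierced).
  - exact/(minimal_vanishing_wd C_pierced)/inCF_minimal.
  - exact: (minimal_vanishing_fam2 C_pierced sigma_sub_tau neurons_covered).
  - exact: (minimal_vanishing_fam3 C_pierced sigma_sub_tau set0_in_code).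
split; [| split] => -[].
- by move=> [a0 [b0 [_ -> _]]] [i [_ /setP /(_ ord_max)]]; rewrite max_notin_wd setU11.
- by move=> [a0 [b0 [_ -> _]]] [j [_ /setP /(_ ord_max)]]; rewrite max_notin_wd set11.
- by move=> [i [_ _ ->]] [j [_ _ /setP /(_ (wd j))]]; rewrite inE set11.
Qed.
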